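(* Let $M,K$ be real symmetric positive definite $N\times N$ matrices, $\Delta t>0$, and let $(f_{k+\frac12})_{k\ge0}$ be vectors in $\mathbb{R}^N$. Let $(q_n,p_n)_{n\ge0}$ satisfy, for all $n\ge0$, $$q_{n+1}=q_n+\Delta t\,M^{-1}\frac{p_n+p_{n+1}}2,\qquad p_{n+1}=p_n-\Delta t\,K\frac{q_n+q_{n+1}}2+\Delta t\,f_{n+\frac12}.$$ Let $E_n:=\frac12p_n^TM^{-1}p_n+\frac12q_n^TKq_n$ and $|f|_{M^{-1}}:=\sqrt{f^TM^{-1}f}$. Then for every $n\ge0$, $$\big|\sqrt{E_n}-\sqrt{E_0}\big|\le\Delta t\,2^{-1/2}\sum_{k=0}^{n-1}|f_{k+\frac12}|_{M^{-1}}.$$ *)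

From mathcomp Require Import all_boot all_order all_algebra.
Set Implicit Arguments. Unset Strict Implicit. Unset Printing Implicit Defensive.
Import Order.TTheory GRing.Theory Num.Theory.
Local Open Scope ring_scope.

Definition qform (R : ringType) (N : nat) (A : 'M[R]_N) (x : 'cV[R]_N) : R :=
  (x^T *m A *m x) 0 0.

Definition sym_posdef (R : realFieldType) (N : nat) (A : 'M[R]_N) : Prop :=
  A^T = A /\ (forall x : 'cV[R]_N, x != 0 -> 0 < qform A x).

Definition energy (R : realFieldType) (N : nat) (M K : 'M[R]_N) (q p : 'cV[R]_N) : R :=
  2^-1 * qform (invmx M) p + 2^-1 * qform K q.

Definition normMinv (R : rcfType) (N : nat) (M : 'M[R]_N) (f : 'cV[R]_N) : R :=
  Num.sqrt (qform (invmx M) f).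

(** Expanding [E_{n+1} - E_n] with the two update equations, the Hamiltonian
    terms cancel (the midpoint rule is symplectic), leaving only the work of the
    force: [E_{n+1} - E_n = dt/2 <f_n, p_n + p_{n+1}>_{M^-1}].  By Cauchy-Schwarz,
    the triangle inequality and [|p|_{M^-1} <= sqrt 2 sqrt E], the right-hand side
    is at most [dt/sqrt 2 |f_n|_{M^-1} (sqrt E_n + sqrt E_{n+1})]; dividing by
    [sqrt E_n + sqrt E_{n+1}] bounds each increment of [sqrt E], and the bounds
    telescope. *)

From mathcomp Require Import all_boot all_order all_algebra.
From mathcomp Require Import ring lra.
Import Order.TTheory GRing.Theory Num.Theory.
Local Open Scope ring_scope.
Set Implicit Arguments. Unset Strict Implicit.

Section Bilinear.
Variables (R : comNzRingType) (N : nat).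
Implicit Types (A B : 'M[R]_N) (x y z : 'cV[R]_N).

Definition bil A x y : R := (x^T *m A *m y) 0 0.

Lemma qformE A x : qform A x = bil A x x. Proof. by []. Qed.

Lemma bilDl A x y z : bil A (x + y) z = bil A x z + bil A y z.
Proof. by rewrite /bil linearD /= !mulmxDl mxE. Qed.

Lemma bilDr A x y z : bil A z (x + y) = bil A z x + bil A z y.
Proof. by rewrite /bil !mulmxDr mxE. Qed.

Lemma bilZl A a x y : bil A (a *: x) y = a * bil A x y.
Proof. by rewrite /bil linearZ /= -!scalemxAl mxE. Qed.

Lemma bilZr A a x y : bil A x (a *: y) = a * bil A x y.
Proof. by rewrite /bil -!scalemxAr mxE. Qed.

Lemma bilBl A x y z : bil A (x - y) z = bil A x z - bil A y z.
Proof. by rewrite bilDl -scaleN1r bilZl mulN1r. Qed.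

Lemma bil0r A x : bil A x 0 = 0.
Proof. by rewrite /bil mulmx0 mxE. Qed.

Lemma bil_trmx A x y : bil A x y = bil A^T y x.
Proof.
rewrite /bil; transitivity ((x^T *m A *m y)^T 0 0); first by rewrite [RHS]mxE.
by rewrite !trmx_mul trmxK mulmxA.
Qed.

Lemma bilC A x y : A^T = A -> bil A x y = bil A y x.
Proof. by move=> symA; rewrite bil_trmx symA. Qed.

Lemma bil_mulmxl A B x y : bil A (B *m x) y = bil B (A *m y) x.
Proof. by rewrite bil_trmx /bil !trmx_mul !mulmxA. Qed.

Lemma bil_subsqr A x y : A^T = A ->
  bil A x x - bil A y y = bil A (x - y) (x + y).
Proof. by move=> symA; rewrite bilBl !bilDr (bilC y x symA); ring. Qed.

End Bilinear.

Definition psd (R : numDomainType) (N : nat) (A : 'M[R]_N) :=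
  forall x : 'cV[R]_N, 0 <= bil A x x.

Lemma sym_posdef_psd (R : realFieldType) N (A : 'M[R]_N) : sym_posdef A -> psd A.
Proof.
move=> [_ posA] x; have [->|x_neq0] := eqVneq x 0; first by rewrite bil0r.
exact/ltW/posA.
Qed.

Lemma psd_invmx (R : numFieldType) N (A : 'M[R]_N) :
  A^T = A -> psd A -> psd (invmx A).
Proof.
move=> symA psdA x; have [unitA | /invmx_out -> //] := boolP (A \in unitmx).
have := psdA (invmx A *m x).
by rewrite /bil trmx_mul trmx_inv symA -!mulmxA (mulmxA A) mulmxV // mul1mx.
Qed.

Section CauchySchwarz.
Variables (R : rcfType) (N : nat) (A : 'M[R]_N).
Hypotheses (symA : A^T = A) (psdA : psd A).
Implicit Types x y : 'cV[R]_N.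

Lemma bil_CauchySchwarz_sqr x y : bil A x y ^+ 2 <= bil A x x * bil A y y.
Proof.
set a := bil A y y; set b := bil A x y; set c := bil A x x.
have quad s t : 0 <= s ^+ 2 * c + 2 * s * t * b + t ^+ 2 * a.
  have := psdA (s *: x + t *: y).
  by rewrite !bilDl !bilDr !bilZl !bilZr (bilC y x symA) -/a -/b -/c => ?; nra.
have a_ge0 : 0 <= a by apply: psdA.
have c_ge0 : 0 <= c by apply: psdA.
have := quad a (- b); have := quad b (- c); have := quad 1 1; have := quad 1 (-1).
have [->|a_neq0] := eqVneq a 0; last by nra.
have [->|c_neq0] := eqVneq c 0; last by nra.
nra.
Qed.

Lemma bil_CauchySchwarz x y :
  `|bil A x y| <= Num.sqrt (bil A x x) * Num.sqrt (bil A y y).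
Proof.
rewrite -sqrtrM ?psdA // -sqrtr_sqr ler_sqrt ?bil_CauchySchwarz_sqr //.
by rewrite mulr_ge0 ?psdA.
Qed.

Lemma sqrt_bilD_le x y :
  Num.sqrt (bil A (x + y) (x + y)) <= Num.sqrt (bil A x x) + Num.sqrt (bil A y y).
Proof.
have sum_ge0 : 0 <= Num.sqrt (bil A x x) + Num.sqrt (bil A y y).
  by rewrite addr_ge0 ?sqrtr_ge0.
rewrite -(ger0_norm sum_ge0) -sqrtr_sqr ler_sqrt ?sqr_ge0 //.
have := bil_CauchySchwarz x y; have := ler_norm (bil A x y).
rewrite !bilDl !bilDr (bilC y x symA).
have := sqr_sqrtr (psdA x); have := sqr_sqrtr (psdA y).
move: (Num.sqrt _) (Num.sqrt _) => sx sy; nra.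
Qed.

End CauchySchwarz.

Lemma dist_le_of_sqr_dist_le (R : realFieldType) (s0 s1 C : R) :
  0 <= s0 -> 0 <= s1 -> 0 <= C ->
  `|s1 ^+ 2 - s0 ^+ 2| <= C * (s0 + s1) -> `|s1 - s0| <= C.
Proof.
move=> s0_ge0 s1_ge0 C_ge0.
rewrite subr_sqr normrM (ger0_norm (addr_ge0 s1_ge0 s0_ge0)) (addrC s1 s0).
have [sum0|sum_gt0] := eqVneq (s0 + s1) 0.
  have [-> ->] : s0 = 0 /\ s1 = 0 by split; lra.
  by rewrite subrr normr0.
by rewrite ler_pM2r // lt_neqAle eq_sym sum_gt0 addr_ge0.
Qed.

Lemma dist_le_sum_of_steps (R : numDomainType) (s c : nat -> R) :
  (forall n, `|s n.+1 - s n| <= c n) ->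
  forall n, `|s n - s 0| <= \sum_(k < n) c k.
Proof.
move=> step; elim=> [|n IH]; first by rewrite subrr normr0 big_ord0.
rewrite big_ord_recr /= (le_trans (ler_distD (s n) _ _)) // addrC.
exact: lerD.
Qed.

Section MidpointEnergy.
Variables (R : rcfType) (N : nat) (M K : 'M[R]_N) (dt : R).
Hypotheses (posM : sym_posdef M) (posK : sym_posdef K).

Let symMinv : (invmx M)^T = invmx M.
Proof. by rewrite trmx_inv posM.1. Qed.

Let psdMinv : psd (invmx M).
Proof. exact: psd_invmx posM.1 (sym_posdef_psd posM). Qed.

Lemma energy_ge0 q p : 0 <= energy M K q p.
Proof.
rewrite /energy !qformE.
by rewrite addr_ge0 ?mulr_ge0 ?invr_ge0 ?ler0n ?psdMinv ?(sym_posdef_psd posK).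
Qed.

Lemma normMinv_le_energy q p :
  normMinv M p <= Num.sqrt 2 * Num.sqrt (energy M K q p).
Proof.
rewrite /normMinv -sqrtrM ?ler0n // ler_sqrt ?mulr_ge0 ?ler0n ?energy_ge0 //.
rewrite /energy !qformE mulrDr !mulrA divff ?pnatr_eq0 // mul1r lerDl.
by rewrite mulr_ge0 ?mulr_ge0 ?invr_ge0 ?ler0n ?(sym_posdef_psd posK).
Qed.

Variables (f q0 q1 p0 p1 : 'cV[R]_N).
Hypotheses (q_step : q1 = q0 + dt *: (invmx M *m (2^-1 *: (p0 + p1))))
           (p_step : p1 = p0 - dt *: (K *m (2^-1 *: (q0 + q1))) + dt *: f).

Lemma energy_step :
  energy M K q1 p1 - energy M K q0 p0 = dt * 2^-1 * bil (invmx M) f (p0 + p1).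
Proof.
set P := 2^-1 *: (p0 + p1); set Q := 2^-1 *: (q0 + q1).
have two_halves (x y : 'cV[R]_N) : y + x = 2 *: (2^-1 *: (x + y)).
  by rewrite scalerA divff ?pnatr_eq0 // scale1r addrC.
have dp : p1 - p0 = dt *: f - dt *: (K *m Q).
  by rewrite {1}p_step addrAC (addrC p0) addrK addrC.
have dq : q1 - q0 = dt *: (invmx M *m P) by rewrite {1}q_step addrC addKr.
have kinetic : bil (invmx M) p1 p1 - bil (invmx M) p0 p0
    = 2 * dt * (bil (invmx M) f P - bil (invmx M) (K *m Q) P).
  by rewrite bil_subsqr // dp (two_halves p0 p1) bilBl !bilZl !bilZr; ring.
have potential : bil K q1 q1 - bil K q0 q0 = 2 * dt * bil (invmx M) (K *m Q) P.
  rewrite bil_subsqr ?posK.1 // dq (two_halves q0 q1) bilZl bilZr bil_mulmxl; ring.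
rewrite /energy !qformE -mulrA -[in RHS]bilZr -/P.
have halves : (2 : R) * 2^-1 = 1 by rewrite divff ?pnatr_eq0.
lra.
Qed.

Hypothesis dt_gt0 : 0 < dt.

Lemma sqrt_energy_step :
  `|Num.sqrt (energy M K q1 p1) - Num.sqrt (energy M K q0 p0)|
     <= dt * (Num.sqrt 2)^-1 * normMinv M f.
Proof.
set s0 := Num.sqrt (energy M K q0 p0); set s1 := Num.sqrt (energy M K q1 p1).
have r_gt0 : 0 < Num.sqrt 2 :> R by rewrite sqrtr_gt0 ltr0n.
apply: dist_le_of_sqr_dist_le; rewrite ?sqrtr_ge0 //.
  by rewrite !mulr_ge0 ?invr_ge0 ?sqrtr_ge0 ?ltW.
rewrite !sqr_sqrtr ?energy_ge0 // energy_step normrM ger0_norm; last first.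
  by rewrite mulr_ge0 ?invr_ge0 ?ler0n ?ltW.
have work : `|bil (invmx M) f (p0 + p1)|
    <= normMinv M f * (Num.sqrt 2 * (s0 + s1)).
  apply: le_trans (bil_CauchySchwarz symMinv psdMinv _ _) _.
  rewrite ler_wpM2l ?sqrtr_ge0 // mulrDr.
  apply: le_trans (sqrt_bilD_le symMinv psdMinv _ _) _.
  exact: lerD (normMinv_le_energy q0 p0) (normMinv_le_energy q1 p1).
have half_sqrt2 : 2^-1 * Num.sqrt 2 = (Num.sqrt 2)^-1 :> R.
  by rewrite -{1}(sqr_sqrtr (ler0n R 2)) expr2 invfM -mulrA mulVf ?mulr1 ?gt_eqF.
apply: le_trans (ler_wpM2l _ work) _.
  by rewrite mulr_ge0 ?invr_ge0 ?ler0n ?ltW.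
by rewrite -half_sqrt2 le_eqVlt; apply/orP; left; apply/eqP; ring.
Qed.

End MidpointEnergy.

Theorem mainTheorem2 (R : rcfType) (N : nat) (M K : 'M[R]_N) (dt : R)
  (f : nat -> 'cV[R]_N) (q p : nat -> 'cV[R]_N) :
  sym_posdef M -> sym_posdef K -> 0 < dt ->
  (forall n : nat,
     q n.+1 = q n + dt *: (invmx M *m (2^-1 *: (p n + p n.+1)))) ->
  (forall n : nat,
     p n.+1 = p n - dt *: (K *m (2^-1 *: (q n + q n.+1))) + dt *: f n) ->
  forall n : nat,
    `|Num.sqrt (energy M K (q n) (p n)) - Num.sqrt (energy M K (q 0) (p 0))|
      <= dt * (Num.sqrt 2)^-1 * \sum_(k < n) normMinv M (f k).
Proof.
move=> posM posK dt_gt0 q_step p_step n; rewrite mulr_sumr.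
pose s k := Num.sqrt (energy M K (q k) (p k)).
pose c k := dt * (Num.sqrt 2)^-1 * normMinv M (f k).
apply: (@dist_le_sum_of_steps _ s c) => k.
exact: sqrt_energy_step.
Qed.
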